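(* Let $k$ be a commutative ring and $P$ an invertible $k$-module. Every $P$-Frobenius $k$-algebra $A$ is a QF algebra in the sense of Müller.
   Context: $P$ invertible means finitely generated projective of constant rank one. $A$ is $P$-Frobenius if it is finitely generated projective over $k$ and $A_A\cong\mathrm{Hom}_k(A,P)_A$ as right $A$-modules, where $(fa)(x)=f(ax)$. $A$ is QF in Müller's sense if it is finitely generated projective over $k$ and $A_A$ is isomorphic to a direct summand of a direct sum of $n$ copies of $A^*_A=\mathrm{Hom}_k(A,k)_A$ for some $n\ge1$. *)

From HB Require Import structures.
From mathcomp Require Import all_boot all_order all_algebra.
Set Implicit Arguments. Unset Strict Implicit. Unset Printing Implicit Defensive.
Import GRing.Theory.
Local Open Scope ring_scope.

Definition fgproj (k : comPzRingType) (M : lmodType k) : Prop :=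
  exists n (f : M -> 'rV[k]_n) (g : 'rV[k]_n -> M),
    linear f /\ linear g /\ cancel f g.

(* Rank of a f.g. projective module at a point of Spec k: for a presentation
   M = image of the idempotent E = f o g on k^n, the rank at a ring morphism
   phi : k -> F into a field is the rank of the matrix phi(E) over F.
   M is invertible iff it is f.g. projective of constant rank one, i.e. this
   rank is 1 for every ring morphism from k to a field. *)
Definition invertible_mod (k : comPzRingType) (M : lmodType k) : Prop :=
  exists n (f : M -> 'rV[k]_n) (g : 'rV[k]_n -> M),
    [/\ linear f, linear g, cancel f g &
      forall (F : fieldType) (phi : {rmorphism k -> F}),
        \rank (map_mx phi (lin1_mx (f \o g))) = 1%N].

(* A is P-Frobenius: A f.g. projective over k and A_A ~= Hom_k(A,P)_A as right
   A-modules, where (h a)(x) = h (a x).  Elements of Hom_k(A,P) are represented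
   as k-linear functions A -> P, compared pointwise. *)
Definition P_Frobenius (k : comPzRingType) (P : lmodType k) (A : algType k)
  : Prop :=
  fgproj A /\
  exists Phi : A -> A -> P,
    [/\ (forall a, linear (Phi a)),
        (forall a b x, Phi (a + b) x = Phi a x + Phi b x),
        (forall a b x, Phi (a * b) x = Phi a (b * x)),
        (forall a b, (forall x, Phi a x = Phi b x) -> a = b) &
        (forall h : A -> P, linear h -> exists a, forall x, Phi a x = h x)].

(* Elements of (A^dual)^n, A^dual = Hom_k(A,k): n-tuples of k-linear maps A -> k. *)
Definition dual_tuple (k : comPzRingType) (A : algType k) n
  (u : 'I_n -> A -> k) : Prop := forall j, linear (u j : A -> k^o).

(* A is QF in Mueller's sense: A f.g. projective over k and A_A is isomorphic
   to a direct summand of (A^dual)^n as right A-modules for some n >= 1, i.e.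
   there are right A-linear maps i : A -> (A^dual)^n, p : (A^dual)^n -> A with
   p o i = id. *)
Definition QF_Muller (k : comPzRingType) (A : algType k) : Prop :=
  fgproj A /\
  exists n : nat, (0 < n)%N /\
  exists (i : A -> 'I_n -> A -> k) (p : ('I_n -> A -> k) -> A),
    [/\ (forall a, dual_tuple (i a)) /\
        (forall a b j x, i (a + b) j x = i a j x + i b j x),
        (forall a b j x, i (a * b) j x = i a j (b * x)),
        (forall u v w, dual_tuple u -> dual_tuple v -> dual_tuple w ->
           (forall j x, w j x = u j x + v j x) -> p w = p u + p v),
        (forall u w b, dual_tuple u -> dual_tuple w ->
           (forall j x, w j x = u j (b * x)) -> p w = p u * b) &
        (forall a, p (i a) = a)].

From HB Require Import structures.
From mathcomp Require Import all_boot all_order all_algebra.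
From Stdlib Require Import ClassicalEpsilon.
Import GRing.Theory.
Set Implicit Arguments.
Unset Strict Implicit.
Local Open Scope ring_scope.

(* The Frobenius isomorphism identifies A_A with Hom_k(A, P), on which A acts
   on the right by precomposition with left multiplication.  A presentation of
   P as a retract of k^n makes Hom_k(A, P) a retract of Hom_k(A, k^n) = (A^* )^n,
   and the retraction commutes with precomposition, hence is right A-linear. *)

Lemma retract_rV_pad (k : comPzRingType) (M : lmodType k) m
    (f : M -> 'rV[k]_m) (g : 'rV[k]_m -> M) :
  linear f -> linear g -> cancel f g ->
  [/\ linear (fun x => row_mx (f x) (0 : 'rV[k]_1)),
      linear (fun v : 'rV[k]_(m + 1) => g (lsubmx v)) &
      cancel (fun x => row_mx (f x) (0 : 'rV[k]_1)) (fun v => g (lsubmx v))].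
Proof.
move=> f_lin g_lin fK; split=> [a x y | a u v | x]; last by rewrite row_mxKl.
- by rewrite f_lin scale_row_mx add_row_mx scaler0 addr0.
- by rewrite linearP g_lin.
Qed.

Section FrobeniusRetract.

Variables (k : comPzRingType) (P : lmodType k) (A : algType k).
Variable Phi : A -> A -> P.
Hypotheses (Phi_linear : forall a, linear (Phi a))
  (PhiD : forall a b x, Phi (a + b) x = Phi a x + Phi b x)
  (PhiM : forall a b x, Phi (a * b) x = Phi a (b * x))
  (Phi_inj : forall a b, (forall x, Phi a x = Phi b x) -> a = b)
  (Phi_onto : forall h : A -> P, linear h -> exists a, forall x, Phi a x = h x).

Definition Phi_inv (h : A -> P) : A :=
  epsilon (inhabits 0) (fun a => forall x, Phi a x = h x).

Lemma Phi_invK h : linear h -> forall x, Phi (Phi_inv h) x = h x.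
Proof. by move/Phi_onto/(epsilon_spec (inhabits 0)). Qed.

Variables (n : nat) (f : P -> 'rV[k]_n) (g : 'rV[k]_n -> P).
Hypotheses (f_linear : linear f) (g_linear : linear g) (fK : cancel f g).

Definition dual_of_hom (h : A -> P) : 'I_n -> A -> k := fun j x => f (h x) 0 j.

Definition hom_of_dual (u : 'I_n -> A -> k) : A -> P := fun x => g (\row_j u j x).

Lemma dual_tuple_dual_of_hom h : linear h -> dual_tuple (dual_of_hom h).
Proof. by move=> h_lin j c x y; rewrite /dual_of_hom h_lin f_linear !mxE. Qed.

Lemma linear_hom_of_dual u : dual_tuple u -> linear (hom_of_dual u).
Proof.
move=> u_lin c x y; rewrite /hom_of_dual -g_linear; congr g.
by apply/rowP => j; rewrite !mxE u_lin.
Qed.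

Lemma dual_of_homK h x : hom_of_dual (dual_of_hom h) x = h x.
Proof.
rewrite /hom_of_dual -[RHS]fK; congr g.
by apply/rowP => j; rewrite mxE.
Qed.

Let i a := dual_of_hom (Phi a).
Let p u := Phi_inv (hom_of_dual u).

Lemma Phi_p u : dual_tuple u -> forall x, Phi (p u) x = hom_of_dual u x.
Proof. by move=> u_lin; apply/Phi_invK/linear_hom_of_dual. Qed.

Lemma Frobenius_retract_QF_Muller : fgproj A -> (0 < n)%N -> QF_Muller A.
Proof.
move=> fgA n_gt0; split=> //; exists n; split=> //; exists i, p.
have fD := (GRing.semilinear_linear f_linear).2.
have gD := (GRing.semilinear_linear g_linear).2.
split.
- split=> [a | a b j x]; first exact: dual_tuple_dual_of_hom.
  by rewrite /i /dual_of_hom PhiD fD mxE.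
- by move=> a b j x; rewrite /i /dual_of_hom PhiM.
- move=> u v w u_lin v_lin w_lin uvw; apply: Phi_inj => x.
  rewrite PhiD !Phi_p // /hom_of_dual -gD; congr g.
  by apply/rowP => j; rewrite !mxE uvw.
- move=> u w b u_lin w_lin uw; apply: Phi_inj => x.
  rewrite PhiM !Phi_p //; congr g.
  by apply/rowP => j; rewrite !mxE uw.
- move=> a; apply: Phi_inj => x.
  by rewrite Phi_p ?dual_of_homK //; apply: dual_tuple_dual_of_hom.
Qed.

End FrobeniusRetract.

Theorem proposition2p3 (k : comPzRingType) (P : lmodType k) (A : algType k) :
  invertible_mod P -> P_Frobenius P A -> QF_Muller A.
Proof.
move=> [m [f [g [f_lin g_lin fK _]]]].
move=> [fgA [Phi [Phi_lin PhiD PhiM Phi_inj Phi_onto]]].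
have [f'_lin g'_lin f'K] := retract_rV_pad f_lin g_lin fK.
apply: (Frobenius_retract_QF_Muller Phi_lin PhiD PhiM Phi_inj Phi_onto
          f'_lin g'_lin f'K fgA).
by rewrite addn1.
Qed.
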